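(* Let $X$ be a nonsingular projective toric variety and $\beta\in H_2(X,\mathbb{Z})$. If the toric divisors $D$ with $\int_\beta D<0$ have nonempty common intersection, then $\beta$ is a linear combination, with nonnegative integer coefficients, of primitive curve classes.
   Context: $X$ has fan $\Delta$ in $N_{\mathbb R}$; each toric divisor $D$ corresponds to a ray generator $\rho\in N$, and toric divisors have nonempty common intersection iff their ray generators span a cone of $\Delta$ (the empty family has intersection $X$). A primitive set is a set $\{D_1,\ldots,D_k\}$ of toric divisors with empty intersection such that every proper subset has nonempty intersection. Then $\rho_1+\cdots+\rho_k$ lies in the relative interior of a unique cone $\langle\rho'_1,\ldots,\rho'_r\rangle\in\Delta$, with $\rho_1+\cdots+\rho_k=a_1\rho'_1+\cdots+a_r\rho'_r$, $a_i>0$. The associated primitive curve class is the unique $\beta\in H_2(X,\mathbb{Z})$ with $\int_\beta D_i=1$ for $i\le k$, $\int_\beta D'_j=-a_j$ for $j\le r$, and $\int_\beta D=0$ for all other toric divisors. *)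

From HB Require Import structures.
From mathcomp Require Import all_boot all_order all_algebra.
Set Implicit Arguments. Unset Strict Implicit. Unset Printing Implicit Defensive.
Import Order.TTheory GRing.Theory Num.Theory.
Local Open Scope ring_scope.

(* The ray generators are
   v i : 'rV[int]_n  (i : 'I_m), and a cone is encoded by the set of indices
   of the rays spanning it; Delta : {set {set 'I_m}} is the set of cones. *)

Definition vQ (n m : nat) (v : 'I_m -> 'rV[int]_n) (i : 'I_m) : 'rV[rat]_n :=
  map_mx intr (v i).

Definition in_cone (n m : nat) (v : 'I_m -> 'rV[int]_n) (S : {set 'I_m})
    (x : 'rV[rat]_n) : Prop :=
  exists c : 'I_m -> rat, (forall i, 0 <= c i) /\ x = \sum_(i in S) c i *: vQ v i.

Definition smooth_projective_fan (n m : nat) (v : 'I_m -> 'rV[int]_n)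
    (Delta : {set {set 'I_m}}) : Prop :=
  (forall i : 'I_m, [set i] \in Delta) /\
  (forall S T : {set 'I_m}, S \in Delta -> T \subset S -> T \in Delta) /\
  (* nonsingular: the generators of each cone are part of a Z-basis of N *)
  (forall S, S \in Delta -> exists M : 'M[int]_n, exists g : 'I_m -> 'I_n,
     M \in unitmx /\ {in S &, injective g} /\ (forall i, i \in S -> v i = row (g i) M)) /\
  (forall S T, S \in Delta -> T \in Delta -> forall x : 'rV[rat]_n,
     in_cone v S x -> in_cone v T x -> in_cone v (S :&: T) x) /\
  (forall x : 'rV[rat]_n, exists2 S, S \in Delta & in_cone v S x) /\
  (* projective: existence of a strictly convex piecewise linear support
     function, i.e. the fan is the normal fan of the polytope
     { u | <v i, u> <= a i for all i } *)
  (exists a : 'I_m -> rat, forall S, S \in Delta ->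
     (forall T, T \in Delta -> S \subset T -> T = S) ->
     exists u : 'cV[rat]_n,
       (forall i, i \in S -> (vQ v i *m u) 0 0 = a i) /\
       (forall i, i \notin S -> (vQ v i *m u) 0 0 < a i)).

(* H_2(X,Z) is identified with the lattice of linear relations among the ray
   generators: beta i = int_beta D_i, with sum_i beta i * v i = 0. *)
Definition curve_class (n m : nat) (v : 'I_m -> 'rV[int]_n)
    (beta : {ffun 'I_m -> int}) : Prop :=
  \sum_(i < m) beta i *: v i = 0.

Definition primitive_set (m : nat) (Delta : {set {set 'I_m}}) (P : {set 'I_m}) : Prop :=
  P \notin Delta /\ (forall Q : {set 'I_m}, Q \proper P -> Q \in Delta).

Definition primitive_class (n m : nat) (v : 'I_m -> 'rV[int]_n)
    (Delta : {set {set 'I_m}}) (P : {set 'I_m}) (beta : {ffun 'I_m -> int}) : Prop :=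
  primitive_set Delta P /\
  exists T : {set 'I_m}, exists a : 'I_m -> int,
    T \in Delta /\ (forall i, i \in T -> 0 < a i) /\
    \sum_(i in P) v i = \sum_(i in T) a i *: v i /\
    (forall i, beta i = (i \in P)%:Z - (if i \in T then a i else 0)).

Definition is_primitive_class (n m : nat) (v : 'I_m -> 'rV[int]_n)
    (Delta : {set {set 'I_m}}) (beta : {ffun 'I_m -> int}) : Prop :=
  exists P, primitive_class v Delta P beta.

From HB Require Import structures.
From mathcomp Require Import all_boot all_order all_algebra zify.
Import Order.TTheory GRing.Theory Num.Theory.
Set Implicit Arguments. Unset Strict Implicit. Unset Printing Implicit Defensive.
Local Open Scope ring_scope.

(* Pick an integral strictly convex support function A, i.e. an ample divisor,
   and induct on the degree deg beta = sum_i beta_i A_i.  If the negative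
   support of a relation among the rays lies in a cone sigma, pairing the
   relation with the linear function u_sigma that agrees with A on sigma and
   is smaller off sigma shows deg >= 0, with deg > 0 as soon as some ray
   outside sigma has a positive coefficient; in particular primitive classes
   have positive degree.  If the positive support of beta is also a cone, the
   two cones meet in a common face, which forces beta = 0.  Otherwise the
   positive support contains a primitive set P; subtracting its primitive
   class lowers the degree and does not enlarge the negative support. *)

Section SupportPairing.
Variables (R : realFieldType) (I : finType) (n : nat).
Variables (x : I -> 'rV[R]_n) (A : I -> R) (u : 'cV[R]_n) (S : {set I}).
Hypothesis u_eq : forall i, i \in S -> (x i *m u) 0 0 = A i.
Hypothesis u_lt : forall i, i \notin S -> (x i *m u) 0 0 < A i.

Lemma relation_pairingE (c : I -> R) : \sum_i c i *: x i = 0 ->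
  \sum_i c i * A i = \sum_i c i * (A i - (x i *m u) 0 0).
Proof.
move=> rel; apply/eqP; rewrite -subr_eq0 -sumrB; apply/eqP.
transitivity (((\sum_i c i *: x i) *m u) 0 0); last by rewrite rel mul0mx mxE.
rewrite mulmx_suml summxE; apply: eq_bigr => i _.
rewrite -scalemxAl; set t := (x i *m u) 0 0.
by rewrite mxE mulrBr opprB addrC subrK.
Qed.

Lemma support_term_ge0 (c : I -> R) i : (forall j, c j < 0 -> j \in S) ->
  0 <= c i * (A i - (x i *m u) 0 0).
Proof.
move=> neg_in_S; have [iS | iNS] := boolP (i \in S).
  by rewrite u_eq // subrr mulr0.
apply: mulr_ge0; last by rewrite subr_ge0 ltW ?u_lt.
by rewrite leNgt; apply: contra iNS => /neg_in_S.
Qed.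

Lemma relation_pairing_ge0 (c : I -> R) : \sum_i c i *: x i = 0 ->
  (forall j, c j < 0 -> j \in S) -> 0 <= \sum_i c i * A i.
Proof.
move=> rel neg_in_S; rewrite relation_pairingE //.
by apply: sumr_ge0 => i _; apply: support_term_ge0.
Qed.

Lemma relation_pairing_gt0 (c : I -> R) i0 : \sum_i c i *: x i = 0 ->
  (forall j, c j < 0 -> j \in S) -> 0 < c i0 -> i0 \notin S ->
  0 < \sum_i c i * A i.
Proof.
move=> rel neg_in_S c_gt0 i0NS; rewrite relation_pairingE // (bigD1 i0) //=.
apply: ltr_pwDl; first by rewrite mulr_gt0 // subr_gt0 u_lt.
by apply: sumr_ge0 => i _; apply: support_term_ge0.
Qed.

End SupportPairing.

Lemma map_intr_mx_inj (p q : nat) : injective (map_mx (intr : int -> rat) : 'M_(p, q) -> _).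
Proof.
move=> M N /matrixP eqMN; apply/matrixP => i j.
by have := eqMN i j; rewrite !mxE => /intr_inj.
Qed.

Lemma unimodular_coord (I : finType) (n : nat) (M : 'M[int]_n) (g : I -> 'I_n)
    (S : {set I}) (c : I -> rat) j :
  M \in unitmx -> {in S &, injective g} -> j \in S ->
  ((\sum_(i in S) c i *: map_mx intr (row (g i) M)) *m map_mx intr (invmx M)) 0 (g j)
  = c j.
Proof.
move=> Mu g_inj jS.
have rowK i : map_mx intr (row (g i) M) *m map_mx intr (invmx M) = delta_mx 0 (g i).
  by rewrite -map_mxM rowE -mulmxA mulmxV // mulmx1 map_delta_mx.
rewrite mulmx_suml summxE (bigD1 j) //= big1 => [|i /andP [iS neq_ij]].
  by rewrite -scalemxAl rowK !mxE !eqxx mulr1 addr0.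
rewrite -scalemxAl rowK !mxE eqxx /=.
case: eqP => [eq_g | _]; last by rewrite mulr0.
by rewrite (g_inj _ _ jS iS eq_g) eqxx in neq_ij.
Qed.

Definition degree (I : finType) (A : I -> int) (beta : {ffun I -> int}) : int :=
  \sum_i beta i * A i.

Lemma degreeB (I : finType) (A : I -> int) (b1 b2 : {ffun I -> int}) :
  degree A (b1 - b2) = degree A b1 - degree A b2.
Proof. by rewrite /degree -sumrB; apply: eq_bigr => i _; rewrite !ffunE mulrBl. Qed.

Lemma degree_ratE (I : finType) (A : I -> int) (beta : {ffun I -> int}) :
  (degree A beta)%:~R = \sum_i (beta i)%:~R * (A i)%:~R :> rat.
Proof. by rewrite rmorph_sum; apply: eq_bigr => i _; rewrite rmorphM. Qed.

Lemma curve_classB (n m : nat) (v : 'I_m -> 'rV[int]_n) (b1 b2 : {ffun 'I_m -> int}) :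
  curve_class v b1 -> curve_class v b2 -> curve_class v (b1 - b2).
Proof.
rewrite /curve_class => rel1 rel2.
by under eq_bigr do rewrite !ffunE scalerBl; rewrite sumrB rel1 rel2 subrr.
Qed.

Lemma primitive_subset (m : nat) (Delta : {set {set 'I_m}}) (Q : {set 'I_m}) :
  Q \notin Delta -> exists2 P : {set 'I_m}, P \subset Q & primitive_set Delta P.
Proof.
move=> QND; have [P minP PQ] := minset_exists (P := [pred T | T \notin Delta]) QND.
exists P => //; split=> [|T ltTP]; first exact: minsetp minP.
apply/negPn/negP => TND; have eqTP := minsetinf minP TND (proper_sub ltTP).
by rewrite eqTP properxx in ltTP.
Qed.

Section Fan.
Variables (n m : nat) (v : 'I_m -> 'rV[int]_n) (Delta : {set {set 'I_m}}).
Hypothesis fanP : smooth_projective_fan v Delta.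

Lemma cone_coord S : S \in Delta ->
  exists (W : 'M[int]_n) (g : 'I_m -> 'I_n), forall (c : 'I_m -> rat) j, j \in S ->
    ((\sum_(i in S) c i *: vQ v i) *m map_mx intr W) 0 (g j) = c j.
Proof.
move=> SD; have [_ [_ [unimodular _]]] := fanP.
have [M [g [Mu [g_inj vS]]]] := unimodular S SD.
exists (invmx M), g => c j jS; rewrite -(unimodular_coord c Mu g_inj jS).
suff -> : \sum_(i in S) c i *: vQ v i = \sum_(i in S) c i *: map_mx intr (row (g i) M) by [].
by apply: eq_bigr => i iS; rewrite /vQ vS.
Qed.

Lemma cone_free S (c : 'I_m -> rat) : S \in Delta ->
  \sum_(i in S) c i *: vQ v i = 0 -> {in S, forall j, c j = 0}.
Proof.
move=> SD rel j jS; have [W [g coord]] := cone_coord SD.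
by rewrite -(coord c j jS) rel mul0mx mxE.
Qed.

Lemma cone_int_coef S (x : 'rV[int]_n) : S \in Delta -> in_cone v S (map_mx intr x) ->
  exists a : 'I_m -> int, (forall i, 0 <= a i) /\ x = \sum_(i in S) a i *: v i.
Proof.
move=> SD [c [c_ge0 xE]]; have [W [g coord]] := cone_coord SD.
have c_int i : i \in S -> c i = (numq (c i))%:~R.
  by move=> iS; rewrite -(coord c i iS) -xE -map_mxM mxE numq_int.
exists (fun i => numq (c i)); split => [i|]; first by rewrite numq_ge0.
apply: map_intr_mx_inj; rewrite xE map_mx_sum; apply: eq_bigr => i iS.
by rewrite {1}(c_int i iS) map_mxZ.
Qed.

Lemma curve_class_vQ (beta : {ffun 'I_m -> int}) : curve_class v beta ->
  \sum_i (beta i)%:~R *: vQ v i = 0.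
Proof.
move=> rel; rewrite -[RHS](map_mx0 intr) -rel map_mx_sum.
by apply: eq_bigr => i _; rewrite map_mxZ.
Qed.

Lemma cone_relation_eq0 (c : 'I_m -> rat) : \sum_i c i *: vQ v i = 0 ->
  [set i | c i < 0] \in Delta -> [set i | 0 < c i] \in Delta -> forall i, c i = 0.
Proof.
move=> rel negD posD; have [_ [_ [_ [face_meet _]]]] := fanP.
set Neg := [set i | c i < 0] in negD *; set Pos := [set i | 0 < c i] in posD *.
set w := \sum_(i in Pos) `|c i| *: vQ v i.
have wE : w = \sum_(i in Neg) `|c i| *: vQ v i.
  apply/eqP; rewrite -subr_eq0 /w [X in X - _]big_mkcond [X in _ - X]big_mkcond.
  rewrite -sumrB -[X in _ == X]rel.
  apply/eqP/eq_bigr => i _; rewrite !inE.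
  by case: ltrgt0P => [_|_|->]; rewrite ?scale0r ?subr0 ?sub0r ?scaleNr ?opprK.
have w0 : w = 0.
  have w_pos : in_cone v Pos w by exists (fun i => `|c i|).
  have w_neg : in_cone v Neg w by rewrite wE; exists (fun i => `|c i|).
  have [d [_ ->]] := face_meet _ _ posD negD _ w_pos w_neg.
  apply: big_pred0 => i; rewrite !inE; apply/negbTE.
  by case: ltrgt0P.
have abs0 T : T \in Delta -> \sum_(i in T) `|c i| *: vQ v i = 0 -> {in T, forall i, c i = 0}.
  by move=> TD relT i iT; apply/normr0_eq0/(cone_free TD relT iT).
move=> i; case: (ltrgt0P (c i)) => [c_gt0 | c_lt0 | //].
  by apply: (abs0 _ posD w0); rewrite inE.
by apply: (abs0 _ negD); rewrite ?inE // -wE.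
Qed.

Lemma curve_class_eq0 (beta : {ffun 'I_m -> int}) : curve_class v beta ->
  [set i | beta i < 0] \in Delta -> [set i | 0 < beta i] \in Delta -> beta = 0.
Proof.
move=> rel negD posD.
have negE : [set j | (beta j)%:~R < 0 :> rat] = [set j | beta j < 0].
  by apply/setP => j; rewrite !inE ltrz0.
have posE : [set j | 0 < (beta j)%:~R :> rat] = [set j | 0 < beta j].
  by apply/setP => j; rewrite !inE ltr0z.
have := cone_relation_eq0 (curve_class_vQ rel); rewrite negE posE => /(_ negD posD) beta0.
by apply/ffunP => i; apply/eqP; rewrite ffunE -(intr_eq0 rat) beta0.
Qed.

Lemma primitive_class_exists P : primitive_set Delta P -> exists r, primitive_class v Delta P r.
Proof.
move=> primP; have [_ [face [_ [_ [complete _]]]]] := fanP.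
set x := \sum_(i in P) v i.
have [S SD xS] := complete (map_mx intr x).
have [a [a_ge0 xE]] := cone_int_coef SD xS.
set T := [set i in S | a i != 0].
have TD : T \in Delta by apply: (face S) => //; apply/subsetP => i; rewrite inE => /andP [].
exists [ffun i => (i \in P)%:Z - (if i \in T then a i else 0)].
split=> //; exists T, a; split; [done | split; [|split]].
- by move=> i; rewrite inE => /andP [_ a_neq0]; rewrite lt_def a_neq0 a_ge0.
- rewrite -/x xE [LHS]big_mkcond [RHS]big_mkcond; apply: eq_bigr => i _; rewrite inE.
  by case: (i \in S); case: eqP => //= ->; rewrite scale0r.
- by move=> i; rewrite ffunE.
Qed.

Lemma primitive_class_curve P r : primitive_class v Delta P r -> curve_class v r.
Proof.
move=> [_ [T [a [_ [_ [PE rE]]]]]]; rewrite /curve_class.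
transitivity (\sum_(i in P) v i - \sum_(i in T) a i *: v i); last by rewrite PE subrr.
rewrite [X in _ = X - _]big_mkcond [X in _ = _ - X]big_mkcond -sumrB.
apply: eq_bigr => i _; rewrite rE scalerBl.
by case: (i \in P); case: (i \in T); rewrite ?scale1r ?scale0r.
Qed.

Lemma neg_support_subB (beta : {ffun 'I_m -> int}) (P : {set 'I_m}) r :
  P \subset [set i | 0 < beta i] -> primitive_class v Delta P r ->
  [set i | (beta - r) i < 0] \subset [set i | beta i < 0].
Proof.
move=> Ppos [_ [T [a [_ [a_gt0 [_ rE]]]]]]; apply/subsetP => i; rewrite !inE !ffunE rE.
have aT_ge0 : 0 <= (if i \in T then a i else 0) by case: ifP => // /a_gt0/ltW.
have [iP | _] := boolP (i \in P); rewrite /=; last by lia.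
by have := subsetP Ppos i iP; rewrite inE; lia.
Qed.

Definition support_function (A : 'I_m -> int) : Prop :=
  forall S, maxset [pred T | T \in Delta] S -> exists u : 'cV[rat]_n,
    (forall i, i \in S -> (vQ v i *m u) 0 0 = (A i)%:~R) /\
    (forall i, i \notin S -> (vQ v i *m u) 0 0 < (A i)%:~R).

Lemma support_function_exists : exists A, support_function A.
Proof.
have [_ [_ [_ [_ [_ [a a_supp]]]]]] := fanP.
pose D : int := \prod_i denq (a i).
have D_gt0 : 0 < D by apply: prodr_gt0 => i _; apply: denq_gt0.
exists (fun i => numq (a i) * \prod_(j | j != i) denq (a j)) => S maxS.
have [u [u_eq u_lt]] := a_supp S (maxsetp maxS) (fun T TD ST => maxsetsup maxS TD ST).
have AE i : (numq (a i) * \prod_(j | j != i) denq (a j))%:~R = D%:~R * a i :> rat.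
  by rewrite /D [in RHS](bigD1 i) //= intrM numqE intrM [RHS]mulrC mulrA.
exists (D%:~R *: u); split => i iS; rewrite -scalemxAr mxE AE.
  by rewrite u_eq.
by rewrite ltr_pM2l ?u_lt ?ltr0z.
Qed.

Section Degree.
Variable A : 'I_m -> int.
Hypothesis A_supp : support_function A.

Lemma degree_ge0 (beta : {ffun 'I_m -> int}) : curve_class v beta ->
  [set i | beta i < 0] \in Delta -> 0 <= degree A beta.
Proof.
move=> rel negD; have [S maxS negS] := maxset_exists (P := [pred T | T \in Delta]) negD.
have [u [u_eq u_lt]] := A_supp maxS.
rewrite -(ler0z rat) degree_ratE.
apply: (relation_pairing_ge0 u_eq u_lt (curve_class_vQ rel)) => i.
by rewrite ltrz0 => beta_lt0; apply: (subsetP negS); rewrite inE.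
Qed.

Lemma degree_primitive_gt0 (P : {set 'I_m}) r : primitive_class v Delta P r -> 0 < degree A r.
Proof.
move=> rP; have rel := primitive_class_curve rP; have [_ [face _]] := fanP.
move: rP => [[PND _] [T [a [TD [_ [_ rE]]]]]].
have [S maxS TS] := maxset_exists (P := [pred T | T \in Delta]) TD.
have [u [u_eq u_lt]] := A_supp maxS.
have [i0 i0P i0NS] : exists2 i0, i0 \in P & i0 \notin S.
  apply/subsetPn; apply: contra PND => PS.
  by apply: (face S) => //; exact: maxsetp maxS.
have i0NT : i0 \notin T by apply: contra i0NS; apply: (subsetP TS).
rewrite -(ltr0z rat) degree_ratE.
apply: (relation_pairing_gt0 u_eq u_lt (curve_class_vQ rel) (i0 := i0)) => //.
- move=> i; rewrite ltrz0 rE; case: (boolP (i \in T)) => [/(subsetP TS) // | _].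
  by rewrite subr0; case: (i \in P).
- by rewrite ltr0z rE i0P (negbTE i0NT) subr0.
Qed.

Lemma primitive_decomposition (beta : {ffun 'I_m -> int}) : curve_class v beta ->
  [set i | beta i < 0] \in Delta ->
  exists s : seq {ffun 'I_m -> int},
    (forall b, b \in s -> is_primitive_class v Delta b) /\ beta = \sum_(b <- s) b.
Proof.
have [_ [face _]] := fanP.
have [k] := ubnP `|degree A beta|%N; elim: k beta => // k IH beta deg_lt rel negD.
have [posD | posND] := boolP ([set i | 0 < beta i] \in Delta).
  by exists [::]; rewrite big_nil (curve_class_eq0 rel negD posD).
have [P Ppos primP] := primitive_subset posND.
have [r rP] := primitive_class_exists primP.
have rel' := curve_classB rel (primitive_class_curve rP).
have negD' := face _ _ negD (neg_support_subB Ppos rP).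
have deg_lt' : (`|degree A (beta - r)%R| < k)%N.
  move: deg_lt (degree_ge0 rel negD) (degree_ge0 rel' negD') (degree_primitive_gt0 rP).
  by rewrite degreeB; lia.
have [s [s_prim betaE]] := IH _ deg_lt' rel' negD'.
exists (r :: s); split=> [b | ]; last by rewrite big_cons -betaE addrC subrK.
by rewrite inE => /predU1P [-> | /s_prim //]; exists P.
Qed.

End Degree.
End Fan.

Theorem proposition2p3 (n m : nat) (v : 'I_m -> 'rV[int]_n)
    (Delta : {set {set 'I_m}}) (beta : {ffun 'I_m -> int}) :
  smooth_projective_fan v Delta ->
  curve_class v beta ->
  [set i | beta i < 0] \in Delta ->
  exists s : seq {ffun 'I_m -> int},
    (forall b, b \in s -> is_primitive_class v Delta b) /\
    beta = \sum_(b <- s) b.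
Proof.
move=> fanP; have [A A_supp] := support_function_exists fanP.
exact: primitive_decomposition A_supp beta.
Qed.
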